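(* Consider the generalized trimmed lasso problem $$\min_{x_0,\ldots,x_L}\ f(x_0,\ldots,x_L)+\sum_{l=1}^L\gamma_l T_{K_l,m_l,p_l}(D_lx_l-c_l),$$ where $f$ is $M$-smooth on the whole space, and suppose that for every $l\in[L]$ there is $\overline{x}_l$ with $D_l\overline{x}_l=c_l$. Let $x^*=(x_0^*,\ldots,x_L^* )$ be a d-stationary point and $C_0,\ldots,C_L>0$ be constants with $\|x_l^*\|_2\le C_l$ for $l=0,\ldots,L$. If for all $l\in[L]$ $$\gamma_l>\frac{1}{\sigma_{K_l,m_l,p_l}(D_l)}\Big(\|\nabla_{x_l}f(0,\ldots,0)\|_2+M\sqrt{\textstyle\sum_{k=0}^L C_k^2}\Big),$$ then $T_{K_l,m_l,p_l}(D_lx_l^*-c_l)=0$ for all $l\in[L]$. For those $l$ with $p_l=1$, $D_l=I$, $c_l=0$, the threshold on the right-hand side may be replaced by $\|\nabla_{x_l}f(0,\ldots,0)\|_\infty+M\sqrt{\sum_{k=0}^LC_k^2}$.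
   Context: Trimmed $\ell_1$ norm: for $z=(z_1^\top,\ldots,z_m^\top)^\top\in\mathbb{R}^{mp}$, $z_i\in\mathbb{R}^p$, $K\in\{0,\ldots,m-1\}$: $T_{K,m,p}(z)=\min_{\Lambda\subset[m],|\Lambda|=m-K}\sum_{i\in\Lambda}\|z_i\|_2$. Data: $n_0\ge0$, $\gamma_l>0$, $K_l\in\{0,\ldots,m_l-1\}$, $c_l\in\mathbb{R}^{m_lp_l}$, $D_l\ne0$ an $m_lp_l\times n_l$ matrix. $f$ is $M$-smooth if it is continuously differentiable with $\|\nabla f(x)-\nabla f(y)\|_2\le M\|x-y\|_2$; $\nabla_{x_l}f$ is the block of the gradient for $x_l$. $x^*$ is d-stationary if the directional derivative of the objective at $x^*$ is $\ge0$ in every direction. $\sigma_{\min}(A)$ = smallest nonzero singular value of $A\ne0$. For $D$ with $p\times n$ blocks $(D)_1,\ldots,(D)_m$ and $(D)_\Lambda$ the submatrix of blocks in $\Lambda$: $\sigma_{K,m,p}(D)=\sigma_{\min}(D)$ if $D$ is surjective, else $\min\{\sigma_{\min}((D)_\Lambda)\mid |\Lambda|=m-K,(D)_\Lambda\ne0\}$. *)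

From HB Require Import structures.
From mathcomp Require Import all_boot all_order all_algebra.
From mathcomp Require Import all_classical all_reals all_analysis.
Set Implicit Arguments. Unset Strict Implicit. Unset Printing Implicit Defensive.
Import Order.TTheory GRing.Theory Num.Theory.
Import numFieldNormedType.Exports.
Local Open Scope classical_set_scope.
Local Open Scope ring_scope.

Section Defs.
Variable R : realType.

Definition vnorm k (v : 'cV[R]_k) : R := Num.sqrt (\sum_(i < k) v i 0 ^+ 2).
Definition vnorm_inf k (v : 'cV[R]_k) : R := \big[Order.max/0]_(i < k) `|v i 0|.

(** Block indexing of R^{m p}: block i (0-based), entry j  |->  i*p + j. *)
Lemma blk_lt m p (i : 'I_m) (j : 'I_p) : (i * p + j < m * p)%N.
Proof.
case: i j => i Hi [j Hj] /=.
apply: (@leq_trans ((i.+1) * p)); first by rewrite mulSn [(p + _)%N]addnC ltn_add2l.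
by rewrite leq_mul2r Hi orbT.
Qed.
Definition blk m p (i : 'I_m) (j : 'I_p) : 'I_(m * p) := Ordinal (blk_lt i j).

Definition block m p (z : 'cV[R]_(m * p)) (i : 'I_m) : 'cV[R]_p :=
  \col_(j < p) z (blk i j) 0.

(** The bigop minimum starts from the (larger or equal) full sum, which is
    never smaller than any of the candidate sums, so it is the true minimum. *)
Definition trimmed (K m p : nat) (z : 'cV[R]_(m * p)) : R :=
  \big[Order.min/ \sum_(i < m) vnorm (block z i)]_(S : {set 'I_m} | #|S| == (m - K)%N)
     \sum_(i in S) vnorm (block z i).

Definition sigma_min r c (A : 'M[R]_(r, c)) : R :=
  Num.sqrt (inf [set lam : R | eigenvalue (A^T *m A) lam /\ 0 < lam]).

Lemma div_lt c p (k : 'I_(c * p)) : (k %/ p < c)%N.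
Proof.
case: k => k Hk /=; case: p Hk => [|p] Hk; first by rewrite muln0 in Hk.
by rewrite ltn_divLR.
Qed.
Lemma mod_lt c p (k : 'I_(c * p)) : (k %% p < p)%N.
Proof.
case: k => k Hk /=; case: p Hk => [|p] Hk; first by rewrite muln0 in Hk.
by rewrite ltn_mod.
Qed.

(** Row index map of the submatrix (D)_Lambda made of the blocks in Lambda
    (blocks taken in increasing order). *)
Definition subblk_idx m p (S : {set 'I_m}) (k : 'I_(#|S| * p)) : 'I_(m * p) :=
  blk (@enum_val _ (mem S) (Ordinal (div_lt k))) (Ordinal (mod_lt k)).

Definition subblocks m p n (D : 'M[R]_(m * p, n)) (S : {set 'I_m})
  : 'M[R]_(#|S| * p, n) := rowsub (@subblk_idx m p S) D.

Definition sigmaK (K m p n : nat) (D : 'M[R]_(m * p, n)) : R :=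
  if `[< forall y : 'cV[R]_(m * p), exists x : 'cV[R]_n, D *m x = y >]
  then sigma_min D
  else inf [set s : R | exists S : {set 'I_m},
              [/\ #|S| = (m - K)%N, subblocks D S != 0 & s = sigma_min (subblocks D S)]].

Definition bvec (L : nat) (n : 'I_L.+1 -> nat) := forall l : 'I_L.+1, 'cV[R]_(n l).

Definition bzero (L : nat) (n : 'I_L.+1 -> nat) : bvec n := fun l => 0.
Definition badd (L : nat) (n : 'I_L.+1 -> nat) (x y : bvec n) : bvec n := fun l => x l + y l.
Definition bopp (L : nat) (n : 'I_L.+1 -> nat) (x : bvec n) : bvec n := fun l => - x l.
Definition bscale (L : nat) (n : 'I_L.+1 -> nat) (t : R) (x : bvec n) : bvec n := fun l => t *: x l.
Definition bdot (L : nat) (n : 'I_L.+1 -> nat) (x y : bvec n) : R := \sum_(l < L.+1) \sum_(i < n l) x l i 0 * y l i 0.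
Definition bnorm (L : nat) (n : 'I_L.+1 -> nat) (x : bvec n) : R := Num.sqrt (bdot x x).

Definition is_gradient (L : nat) (n : 'I_L.+1 -> nat) (f : bvec n -> R) (g : bvec n -> bvec n) : Prop :=
  forall x : bvec n, forall eps : R, 0 < eps -> exists2 delta : R, 0 < delta &
    forall h : bvec n, bnorm h < delta ->
      `|f (badd x h) - f x - bdot (g x) h| <= eps * bnorm h.

Definition M_smooth (L : nat) (n : 'I_L.+1 -> nat) (M : R) (f : bvec n -> R) (g : bvec n -> bvec n) : Prop :=
  is_gradient f g /\
  forall x y : bvec n, bnorm (badd (g x) (bopp (g y))) <= M * bnorm (badd x (bopp y)).

Definition dstationary (L : nat) (n : 'I_L.+1 -> nat) (F : bvec n -> R) (x : bvec n) : Prop :=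
  forall d : bvec n, exists2 lam : R,
    (fun t : R => (F (badd x (bscale t d)) - F x) / t) @ 0^'+ --> lam & 0 <= lam.

End Defs.

From HB Require Import structures.
From mathcomp Require Import all_boot all_order all_algebra.
From mathcomp Require Import all_classical all_reals all_analysis.
From mathcomp Require Import zify ring lra.
Import Order.TTheory GRing.Theory Num.Theory.
Import numFieldNormedType.Exports.
Local Open Scope classical_set_scope.
Local Open Scope ring_scope.
Set Implicit Arguments. Unset Strict Implicit. Unset Printing Implicit Defensive.

(* Suppose [T = T_{K_l}(D_l xs_l - c_l) > 0] and pick a set [S] of [m_l - K_l] blocks
   realising it.  As [c_l] is in the range of [D_l], the residual is [D_l (xs_l - xb)], so there
   is a direction [d] with [(D_l d)_i = - (D_l xs_l - c_l)_i] for [i] in [S] and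
   [sigma_{K_l}(D_l) |d| <= T]: a preimage of least norm, controlled through the Rayleigh
   quotient by the smallest nonzero singular value of [D_l] (surjective case) or of [(D_l)_S].
   Moving [xs_l] to [xs_l + t d] shrinks the blocks in [S] by the factor [1 - t], so the
   penalty drops by [t gamma_l T], while [f] grows by at most [t <grad_l f(xs), d> + o(t)],
   with [|grad_l f(xs)| <= |grad_l f(0)| + M sqrt(sum_k C_k^2)] by smoothness.  The threshold
   on [gamma_l] makes the directional derivative along [d] negative, contradicting
   d-stationarity.  When [D_l] is the identity, [d] is minus the residual restricted to [S],
   and the duality of the l1 and sup norms replaces Cauchy-Schwarz. *)

Section RowGeometry.
Variable R : realType.

Definition dotr k (u v : 'rV[R]_k) : R := \sum_(i < k) u 0 i * v 0 i.
Definition sqn k (u : 'rV[R]_k) : R := dotr u u.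

Lemma dotrC k (u v : 'rV[R]_k) : dotr u v = dotr v u.
Proof. by apply: eq_bigr => i _; rewrite mulrC. Qed.

Lemma dotrDl k (u v w : 'rV[R]_k) : dotr (u + v) w = dotr u w + dotr v w.
Proof. by rewrite /dotr -big_split; apply: eq_bigr => i _; rewrite !mxE mulrDl. Qed.

Lemma dotrZl k a (u w : 'rV[R]_k) : dotr (a *: u) w = a * dotr u w.
Proof. by rewrite /dotr mulr_sumr; apply: eq_bigr => i _; rewrite !mxE mulrA. Qed.

Lemma dotrNl k (u w : 'rV[R]_k) : dotr (- u) w = - dotr u w.
Proof. by rewrite -scaleN1r dotrZl mulN1r. Qed.

Lemma dotr0 k (u : 'rV[R]_k) : dotr u 0 = 0.
Proof. by rewrite /dotr big1 // => i _; rewrite mxE mulr0. Qed.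

Lemma dotr_mulmxl k r (u : 'rV[R]_k) (A : 'M[R]_(k, r)) (w : 'rV[R]_r) :
  dotr (u *m A) w = dotr u (w *m A^T).
Proof.
have dotrE j (x y : 'rV[R]_j) : dotr x y = (x *m y^T) 0 0.
  by rewrite mxE; apply: eq_bigr => i _; rewrite !mxE.
by rewrite !dotrE trmx_mul trmxK mulmxA.
Qed.

Lemma sqn_ge0 k (u : 'rV[R]_k) : 0 <= sqn u.
Proof. by apply: sumr_ge0 => i _; rewrite -expr2 sqr_ge0. Qed.

Lemma sqn_eq0 k (u : 'rV[R]_k) : sqn u = 0 -> u = 0.
Proof.
move=> u0; apply/rowP => i; rewrite mxE; apply/eqP; rewrite -sqrf_eq0.
have /psumr_eq0P u2 : \sum_(j < k) u 0 j ^+ 2 = 0.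
  by rewrite -[RHS]u0; apply: eq_bigr => j _; rewrite expr2.
by rewrite u2 // => j _; rewrite sqr_ge0.
Qed.

Lemma sqn_gt0 k (u : 'rV[R]_k) : u != 0 -> 0 < sqn u.
Proof.
by move=> u0; rewrite lt_def sqn_ge0 andbT; apply/eqP => /sqn_eq0 u0'; rewrite u0' eqxx in u0.
Qed.

Lemma sqn0 k : sqn (0 : 'rV[R]_k) = 0.
Proof. exact: dotr0. Qed.

Lemma sqnZ k a (u : 'rV[R]_k) : sqn (a *: u) = a ^+ 2 * sqn u.
Proof. by rewrite /sqn dotrZl dotrC dotrZl mulrA expr2. Qed.

Lemma sqnD k (u v : 'rV[R]_k) : sqn (u + v) = sqn u + 2 * dotr u v + sqn v.
Proof.
rewrite /sqn dotrDl (dotrC u (u + v)) (dotrC v (u + v)) !dotrDl (dotrC v u); ring.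
Qed.

Lemma coord_le_sqn k (u : 'rV[R]_k) j : u 0 j ^+ 2 <= sqn u.
Proof.
rewrite /sqn /dotr (bigD1 j) //= -expr2 lerDl.
by apply: sumr_ge0 => i _; rewrite -expr2 sqr_ge0.
Qed.

Lemma cauchy_schwarz k (u v : 'rV[R]_k) : dotr u v <= Num.sqrt (sqn u) * Num.sqrt (sqn v).
Proof.
have [->|v0] := eqVneq v 0; first by rewrite dotr0 sqn0 sqrtr0 mulr0.
have sv_gt0 := sqn_gt0 v0.
set t := dotr u v / sqn v.
have := sqn_ge0 (u - t *: v).
rewrite -scaleNr sqnD sqnZ sqrrN (dotrC u) dotrZl.
have -> : sqn u + 2 * (- t * dotr v u) + t ^+ 2 * sqn v = sqn u - dotr u v ^+ 2 / sqn v.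
  by rewrite /t (dotrC v u); field; rewrite gt_eqF.
rewrite subr_ge0 ler_pdivrMr // => uv2.
rewrite -sqrtrM ?sqn_ge0 //; apply: le_trans (ler_norm _) _.
by rewrite -sqrtr_sqr ler_sqrt // mulr_ge0 // sqn_ge0.
Qed.

Lemma mulmx_trmx_eq0 a b (X : 'M[R]_(a, b)) : X *m X^T = 0 -> X = 0.
Proof.
move=> XX0; apply/row_matrixP => i; rewrite row0; apply: sqn_eq0.
have -> : sqn (row i X) = (X *m X^T) i i.
  by rewrite mxE; apply: eq_bigr => j _; rewrite !mxE.
by rewrite XX0 mxE.
Qed.

Lemma submx_mul_trmx_eq0 c r (A : 'M[R]_(r, c)) (v : 'rV[R]_c) :
  (v <= A)%MS -> v *m A^T = 0 -> v = 0.
Proof.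
move=> /submxP [u ->] uAA0; apply: mulmx_trmx_eq0.
by rewrite trmx_mul mulmxA uAA0 mul0mx.
Qed.

(* [A A^T] and [A^T] have the same column space, since their kernels coincide. *)
Lemma submx_trmx_preimage c r (A : 'M[R]_(r, c)) (x : 'rV[R]_c) :
  exists2 d : 'rV[R]_c, (d <= A)%MS & d *m A^T = x *m A^T.
Proof.
have sub_AAt : (A *m A^T <= A^T)%MS by apply: submxMl.
have ker_AAt : (kermx (A *m A^T) <= kermx A)%MS.
  apply/sub_kermxP; apply: mulmx_trmx_eq0.
  have /sub_kermxP h := submx_refl (kermx (A *m A^T)).
  by rewrite trmx_mul mulmxA -(mulmxA _ A) h mul0mx.
have rk : (\rank A^T <= \rank (A *m A^T))%N.
  have := mxrankS ker_AAt; rewrite !mxrank_ker mxrank_tr.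
  have := rank_leq_row A; have := rank_leq_row (A *m A^T); lia.
have /eqmxP eqAAt : (A *m A^T == A^T)%MS.
  by have := mxrank_leqif_eq sub_AAt => /leqifP; case: ifP => // _; rewrite ltnNge rk.
have /submxP [u xAt] : (x *m A^T <= A *m A^T)%MS by rewrite eqAAt submxMl.
by exists (u *m A); [exact: submxMl | rewrite xAt mulmxA].
Qed.

End RowGeometry.

Section SmallestSingularValue.
Variable R : realType.

Lemma continuous_sum (T : topologicalType) (I : Type) (s : seq I) (P : pred I)
    (F : I -> T -> R) :
  (forall i, continuous (F i)) -> continuous (fun x => \sum_(i <- s | P i) F i x).
Proof.
move=> F_cont; elim: s => [|a s IHs].
  have -> : (fun x => \sum_(i <- [::] | P i) F i x) = fun=> 0.
    by apply: funext => x; rewrite big_nil.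
  exact: cst_continuous.
have -> : (fun x => \sum_(i <- a :: s | P i) F i x) =
    fun x => (if P a then F a x else 0) + \sum_(i <- s | P i) F i x.
  by apply: funext => x; rewrite big_cons; case: (P a); rewrite ?add0r.
move=> x; apply: continuousD; last exact: IHs.
by case: (P a); [exact: F_cont | exact: cst_continuous].
Qed.

Lemma continuous_sqn_mulmx c k (N : 'M[R]_(c, k)) :
  continuous (fun v : 'rV[R]_c => sqn (v *m N)).
Proof.
have coord_cont j : continuous (fun v : 'rV[R]_c => (v *m N) 0 j).
  have -> : (fun v : 'rV[R]_c => (v *m N) 0 j) = fun v => \sum_(i < c) v 0 i * N i j.
    by apply: funext => v; rewrite mxE.
  apply: continuous_sum => i x; apply: continuousM; first exact: coord_continuous.
  exact: cst_continuous.
by apply: continuous_sum => j x; apply: continuousM; apply: coord_cont.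
Qed.

Definition row_sphere c r (A : 'M[R]_(r, c)) :=
  [set v : 'rV[R]_c | (v <= A)%MS /\ sqn v = 1].

(* The sphere is the zero set of the continuous map [v |-> |v P|^2 + (|v|^2 - 1)^2],
   where [P = cokermx A] annihilates exactly the row space of [A]. *)
Lemma row_sphere_compact c r (A : 'M[R]_(r, c)) : compact (row_sphere A).
Proof.
apply: bounded_closed_compact.
  rewrite /= /bounded_near.
  apply: filterS (nbhs_pinfty_ge (r := 1) (num_real 1)) => M M1 v [_ v1].
  rewrite /= [X in X <= _]/Num.norm /= mx_normrE; apply: bigmax_le; first exact: le_trans M1.
  move=> [i j] _ /=; apply: le_trans M1.
  have := coord_le_sqn v j; rewrite v1 (ord1 i) => h.
  by have [ge|lt] := lerP 0 (v 0 j); [rewrite ger0_norm // | rewrite ltr0_norm //]; nra.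
have -> : row_sphere A = (fun v => sqn (v *m cokermx A) + (sqn (v *m 1%:M) - 1) ^+ 2)
    @^-1` [set x | x = 0].
  apply/seteqP; split => v /=.
    move=> [vA v1]; move: vA; rewrite submxE => /eqP ->.
    by rewrite mulmx1 v1 subrr expr0n /= addr0 sqn0.
  move/eqP; rewrite paddr_eq0 ?sqn_ge0 ?sqr_ge0 // => /andP [/eqP vP].
  rewrite sqrf_eq0 subr_eq0 mulmx1 => /eqP v1; split => //.
  by rewrite submxE (sqn_eq0 vP).
apply: preimage_closed; last exact: closed_eq.
move=> v _; apply: (continuousD (f := fun w : 'rV[R]_c => sqn (w *m cokermx A))
  (g := fun w : 'rV[R]_c => (sqn (w *m 1%:M) - 1) ^+ 2)); first exact: continuous_sqn_mulmx.
have -> : (fun w : 'rV[R]_c => (sqn (w *m 1%:M) - 1) ^+ 2) =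
    (fun w => sqn (w *m 1%:M) - 1) \* (fun w => sqn (w *m 1%:M) - 1).
  by apply: funext => w /=; rewrite expr2.
have sphere_eq_cont : continuous (fun w : 'rV[R]_c => sqn (w *m 1%:M) - 1).
  by move=> w; apply: (continuousB (f := fun w : 'rV[R]_c => sqn (w *m 1%:M)) (g := fun=> 1));
    [exact: continuous_sqn_mulmx | exact: cst_continuous].
by apply: continuousM; apply: sphere_eq_cont.
Qed.

Lemma rayleigh_minimizer c r (A : 'M[R]_(r, c)) : A != 0 ->
  exists v0 : 'rV[R]_c, [/\ (v0 <= A)%MS, sqn v0 = 1 &
    forall w, (w <= A)%MS -> sqn w = 1 -> sqn (v0 *m A^T) <= sqn (w *m A^T)].
Proof.
move=> A0; have /existsP [i Ai0] : [exists i, row i A != 0].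
  apply: contraLR A0; rewrite negb_exists negbK => /forallP rowA0.
  by apply/eqP/row_matrixP => i; rewrite row0; apply/eqP; rewrite -[_ == _]negbK rowA0.
have sphere0 : row_sphere A !=set0.
  exists ((Num.sqrt (sqn (row i A)))^-1 *: row i A); split; first by rewrite scalemx_sub // row_sub.
  by rewrite sqnZ exprVn sqr_sqrtr ?mulVf ?gt_eqF ?sqn_gt0 // ltW // sqn_gt0.
have [v0 + v0min] := EVT_min_rV sphere0 (@row_sphere_compact _ _ A)
  (continuous_subspaceT (continuous_sqn_mulmx (N := A^T))).
rewrite in_setE => -[v0A v01]; exists v0; split => // w wA w1.
by apply: v0min; rewrite in_setE.
Qed.

Lemma quadratic_ge0_slope0 (a b : R) : (forall t, 0 <= 2 * t * a + t ^+ 2 * b) -> a = 0.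
Proof.
move=> q_ge0; apply/eqP; apply: contraT => a0.
set k := `|b| + 1.
have k_gt0 : 0 < k by rewrite /k ltr_pwDr // normr_ge0.
have bk : b / k <= 1.
  by rewrite ler_pdivrMr // mul1r /k; apply: le_trans (ler_norm b) _; rewrite lerDl.
have a2 : 0 < a ^+ 2 by rewrite exprn_even_gt0.
have := q_ge0 (- a / k).
have -> : 2 * (- a / k) * a + (- a / k) ^+ 2 * b = a ^+ 2 / k * (- 2 + b / k).
  by field; rewrite gt_eqF.
rewrite pmulr_rge0 ?divr_gt0 //; lra.
Qed.

Section RayleighQuotient.
Variables (c r : nat) (A : 'M[R]_(r, c)) (v0 : 'rV[R]_c).
Hypotheses (v0A : (v0 <= A)%MS) (v01 : sqn v0 = 1).
Hypothesis v0min : forall w, (w <= A)%MS -> sqn w = 1 -> sqn (v0 *m A^T) <= sqn (w *m A^T).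

Let mu := sqn (v0 *m A^T).

Lemma rayleigh_gt0 : 0 < mu.
Proof.
apply: sqn_gt0; apply/eqP => /(submx_mul_trmx_eq0 v0A) v00.
by move: v01; rewrite v00 sqn0 => /eqP; rewrite eq_sym oner_eq0.
Qed.

Lemma rayleigh_le w : (w <= A)%MS -> mu * sqn w <= sqn (w *m A^T).
Proof.
move=> wA; have [->|w0] := eqVneq w 0; first by rewrite mul0mx !sqn0 mulr0.
have sw := sqn_gt0 w0; set s := Num.sqrt (sqn w).
have s_gt0 : 0 < s by rewrite sqrtr_gt0.
have : mu <= sqn ((s^-1 *: w) *m A^T).
  apply: v0min; first exact: scalemx_sub.
  by rewrite sqnZ exprVn sqr_sqrtr ?mulVf ?gt_eqF // ltW.
rewrite -scalemxAl sqnZ exprVn (sqr_sqrtr (sqn_ge0 w)) => h.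
by apply: le_trans (ler_wpM2r (ltW sw) h) _; rewrite mulrAC mulVf ?gt_eqF // mul1r.
Qed.

(* First-order optimality of [v0] along [v0 + t w]. *)
Lemma rayleigh_orthogonality w :
  (w <= A)%MS -> dotr (v0 *m A^T) (w *m A^T) = mu * dotr v0 w.
Proof.
move=> wA; apply/eqP; rewrite -subr_eq0; apply/eqP.
apply: (@quadratic_ge0_slope0 _ (sqn (w *m A^T) - mu * sqn w)) => t.
have := @rayleigh_le (v0 + t *: w); rewrite addmx_sub ?scalemx_sub // => /(_ isT).
rewrite mulmxDl -scalemxAl !sqnD !sqnZ v01 -/mu (dotrC v0) (dotrC (v0 *m A^T)) !dotrZl.
rewrite (dotrC (v0 *m A^T) (t *: _)) dotrZl -subr_ge0 => h.
by apply: le_trans h _; rewrite le_eqVlt (dotrC w v0); apply/orP; left; apply/eqP; ring.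
Qed.

Lemma rayleigh_eigenvalue : eigenvalue (A^T *m A) mu.
Proof.
apply/eigenvalueP; exists v0; last first.
  by apply/eqP => v00; move: v01; rewrite v00 sqn0 => /eqP; rewrite eq_sym oner_eq0.
set e := v0 *m (A^T *m A) - mu *: v0.
have eA : (e <= A)%MS by rewrite addmx_sub ?eqmx_opp ?scalemx_sub // mulmxA submxMl.
have : sqn e = 0.
  rewrite {1}/sqn {1}/e dotrDl dotrNl dotrZl mulmxA dotr_mulmxl (dotrC _ e).
  by rewrite rayleigh_orthogonality // dotrC subrr.
by move/sqn_eq0/eqP; rewrite subr_eq0 => /eqP.
Qed.

Lemma rayleigh_le_eigenvalue lam : eigenvalue (A^T *m A) lam -> 0 < lam -> mu <= lam.
Proof.
move=> /eigenvalueP [v vAA v0'] lam_gt0.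
have vA : (v <= A)%MS.
  have -> : v = lam^-1 *: (v *m (A^T *m A)) by rewrite vAA scalerA mulVf ?gt_eqF ?scale1r.
  by rewrite scalemx_sub // mulmxA submxMl.
have := rayleigh_le vA; rewrite {2}/sqn -dotr_mulmxl -mulmxA vAA dotrZl.
by rewrite ler_pM2r // sqn_gt0.
Qed.

End RayleighQuotient.

Lemma sigma_min_rayleigh c r (A : 'M[R]_(r, c)) : A != 0 ->
  exists2 mu, 0 < mu & sigma_min A = Num.sqrt mu /\
    forall w, (w <= A)%MS -> mu * sqn w <= sqn (w *m A^T).
Proof.
move=> /rayleigh_minimizer [v0 [v0A v01 v0min]].
set mu := sqn (v0 *m A^T); set E := [set lam : R | eigenvalue (A^T *m A) lam /\ 0 < lam].
have mu_gt0 : 0 < mu := rayleigh_gt0 v0A v01.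
have muE : E mu := conj (rayleigh_eigenvalue v0A v01 v0min) mu_gt0.
have mu_lb : lbound E mu by move=> lam [] /(rayleigh_le_eigenvalue v0min); apply.
have infE : inf E = mu.
  apply/eqP; rewrite eq_le; apply/andP; split; first by apply: ge_inf => //; exists mu.
  by apply: lb_le_inf; first exists mu.
exists mu => //; split; first by rewrite /sigma_min -/E infE.
exact: rayleigh_le v0min.
Qed.

Lemma sigma_min_gt0 c r (A : 'M[R]_(r, c)) : A != 0 -> 0 < sigma_min A.
Proof. by move=> /sigma_min_rayleigh [mu mu_gt0 [-> _]]; rewrite sqrtr_gt0. Qed.

End SmallestSingularValue.

Section Norms.
Variable R : realType.

Lemma sqrtr_le_sq (x y : R) : 0 <= y -> x <= y ^+ 2 -> Num.sqrt x <= y.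
Proof. by move=> y_ge0 /ler_wsqrtr; rewrite sqrtr_sqr ger0_norm. Qed.

Lemma vnorm_ge0 k (v : 'cV[R]_k) : 0 <= vnorm v.
Proof. exact: sqrtr_ge0. Qed.

Lemma vnormE k (d : 'cV[R]_k) : vnorm d = Num.sqrt (sqn d^T).
Proof. by rewrite /vnorm /sqn /dotr; congr Num.sqrt; apply: eq_bigr => i _; rewrite !mxE expr2. Qed.

Lemma vnorm_gt0 k (d : 'cV[R]_k) : d != 0 -> 0 < vnorm d.
Proof.
move=> d0; rewrite vnormE sqrtr_gt0 sqn_gt0 //.
by apply/eqP => dT0; move/eqP: d0; apply; rewrite -[d]trmxK dT0 trmx0.
Qed.

Lemma vnormN k (d : 'cV[R]_k) : vnorm (- d) = vnorm d.
Proof. by congr Num.sqrt; apply: eq_bigr => j _; rewrite mxE sqrrN. Qed.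

Lemma vnorm_scale k (u v : 'cV[R]_k) s : 0 <= s -> (forall j, v j 0 = s * u j 0) ->
  vnorm v = s * vnorm u.
Proof.
move=> s_ge0 vsu; rewrite /vnorm -[s in RHS](ger0_norm s_ge0) -sqrtr_sqr -sqrtrM ?sqr_ge0 //.
by congr Num.sqrt; rewrite mulr_sumr; apply: eq_bigr => j _; rewrite vsu exprMn.
Qed.

Lemma sum_mul_le_vnorm k (a b : 'cV[R]_k) : \sum_(j < k) a j 0 * b j 0 <= vnorm a * vnorm b.
Proof.
rewrite !vnormE; apply: le_trans (cauchy_schwarz a^T b^T).
by rewrite le_eqVlt /dotr; apply/orP; left; apply/eqP; apply: eq_bigr => j _; rewrite !mxE.
Qed.

Lemma vnormD k (a b : 'cV[R]_k) : vnorm (a + b) <= vnorm a + vnorm b.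
Proof.
rewrite [vnorm (a + b)]vnormE linearD /=.
apply: sqrtr_le_sq; first by rewrite addr_ge0 ?vnorm_ge0.
rewrite sqnD !vnormE sqrrD !sqr_sqrtr ?sqn_ge0 // -mulr_natl.
have := cauchy_schwarz a^T b^T; lra.
Qed.

Lemma vnorm_inf_ge0 k (a : 'cV[R]_k) : 0 <= vnorm_inf a.
Proof. by rewrite /vnorm_inf; elim/big_ind: _ => // x y x_ge0 _; rewrite le_max x_ge0. Qed.

Lemma le_vnorm_inf k (a : 'cV[R]_k) j : `|a j 0| <= vnorm_inf a.
Proof. exact: (le_bigmax 0 (fun i => `|a i 0|) j). Qed.

Lemma vnorm_infD k (a b : 'cV[R]_k) : vnorm_inf (a + b) <= vnorm_inf a + vnorm_inf b.
Proof.
apply: bigmax_le; first by rewrite addr_ge0 ?vnorm_inf_ge0.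
by move=> j _; rewrite mxE; apply: le_trans (ler_normD _ _) _; rewrite lerD ?le_vnorm_inf.
Qed.

Lemma vnorm_inf_le_vnorm k (a : 'cV[R]_k) : vnorm_inf a <= vnorm a.
Proof.
apply: bigmax_le; first exact: vnorm_ge0.
move=> j _; rewrite -sqrtr_sqr /vnorm ler_sqrt; last by apply: sumr_ge0 => i _; rewrite sqr_ge0.
by rewrite (bigD1 j) //= lerDl; apply: sumr_ge0 => i _; rewrite sqr_ge0.
Qed.

Lemma vnorm_le_shift k (a b : 'cV[R]_k) e : vnorm (a - b) <= e -> vnorm a <= vnorm b + e.
Proof.
by move=> ab_e; rewrite -(subrK b a) addrC; apply: le_trans (vnormD _ _) _; rewrite lerD2l.
Qed.

Lemma vnorm_inf_le_shift k (a b : 'cV[R]_k) e :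
  vnorm (a - b) <= e -> vnorm_inf a <= vnorm_inf b + e.
Proof.
move=> ab_e; rewrite -(subrK b a) addrC; apply: le_trans (vnorm_infD _ _) _.
by rewrite lerD2l (le_trans (vnorm_inf_le_vnorm _) ab_e).
Qed.

Lemma sum_mul_le_vnorm_inf k (a b : 'cV[R]_k) :
  \sum_(j < k) a j 0 * b j 0 <= vnorm_inf a * \sum_(j < k) `|b j 0|.
Proof.
rewrite mulr_sumr; apply: ler_sum => j _; apply: le_trans (ler_norm _) _.
by rewrite normrM ler_wpM2r ?le_vnorm_inf.
Qed.

Lemma min_norm_preimage r c (A : 'M[R]_(r, c)) (x : 'cV[R]_c) : A != 0 ->
  exists d : 'cV[R]_c, A *m d = A *m x /\ sigma_min A * vnorm d <= vnorm (A *m x).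
Proof.
move=> /sigma_min_rayleigh [mu mu_gt0 [-> rayleigh]].
have [dr drA dAt] := submx_trmx_preimage A x^T.
exists dr^T; split; first by rewrite -[A *m dr^T]trmxK trmx_mul trmxK dAt trmx_mul !trmxK.
rewrite !vnormE trmxK trmx_mul -dAt -(sqrtrM _ (ltW mu_gt0)).
by rewrite ler_sqrt ?sqn_ge0 // rayleigh.
Qed.

End Norms.

Section Blocks.
Variable R : realType.

Definition blkof m p (k : 'I_(m * p)) : 'I_m := Ordinal (div_lt k).
Definition inblk m p (k : 'I_(m * p)) : 'I_p := Ordinal (mod_lt k).

Lemma blkofK m p (i : 'I_m) (j : 'I_p) : blkof (blk i j) = i.
Proof.
apply: val_inj => /=; have p_gt0 : (0 < p)%N by case: j => j /=; case: p.
by rewrite divnMDl // divn_small ?addn0.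
Qed.

Lemma inblkK m p (i : 'I_m) (j : 'I_p) : inblk (blk i j) = j.
Proof. by apply: val_inj => /=; rewrite modnMDl modn_small. Qed.

Lemma blkK m p (k : 'I_(m * p)) : blk (blkof k) (inblk k) = k.
Proof. by apply: val_inj => /=; rewrite -divn_eq. Qed.

Lemma sum_blk m p (F : 'I_(m * p) -> R) :
  \sum_(k < m * p) F k = \sum_(i < m) \sum_(j < p) F (blk i j).
Proof.
rewrite pair_big /= (reindex (fun ij : 'I_m * 'I_p => blk ij.1 ij.2)) //=.
exists (fun k => (blkof k, inblk k)) => [[i j] _|k _] /=; last exact: blkK.
by rewrite blkofK inblkK.
Qed.

Lemma subblk_idx_blk m p (S : {set 'I_m}) (i : 'I_#|S|) (j : 'I_p) :
  subblk_idx (blk i j) = blk (enum_val i) j.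
Proof.
rewrite /subblk_idx; congr blk; last by apply: val_inj; rewrite /= modnMDl modn_small.
congr enum_val; apply: val_inj => /=; have p_gt0 : (0 < p)%N by case: j => j /=; case: p.
by rewrite divnMDl // divn_small ?addn0.
Qed.

Lemma sum_subblk m p (S : {set 'I_m}) (F : 'I_(m * p) -> R) :
  \sum_(k < #|S| * p) F (subblk_idx k) = \sum_(i in S) \sum_(j < p) F (blk i j).
Proof.
rewrite sum_blk (big_enum_val (fun i => \sum_(j < p) F (blk i j))).
by apply: eq_bigr => i _; apply: eq_bigr => j _; rewrite subblk_idx_blk.
Qed.

Lemma subblocks_mulmx m p n (D : 'M[R]_(m * p, n)) (S : {set 'I_m}) (v : 'cV[R]_n) k :
  (subblocks D S *m v) k 0 = (D *m v) (subblk_idx k) 0.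
Proof. by rewrite !mxE; apply: eq_bigr => j _; rewrite !mxE. Qed.

Lemma vnorm_block m p (z : 'cV[R]_(m * p)) i :
  vnorm (block z i) ^+ 2 = \sum_(j < p) z (blk i j) 0 ^+ 2.
Proof.
rewrite /vnorm sqr_sqrtr; last by apply: sumr_ge0 => j _; rewrite sqr_ge0.
by apply: eq_bigr => j _; rewrite mxE.
Qed.

Definition blocknorm_sum m p (z : 'cV[R]_(m * p)) (S : {set 'I_m}) :=
  \sum_(i in S) vnorm (block z i).

Definition mask_blocks m p (S : {set 'I_m}) (z : 'cV[R]_(m * p)) : 'cV[R]_(m * p) :=
  \col_k (if blkof k \in S then z k 0 else 0).

Lemma blocknorm_sum_ge0 m p (z : 'cV[R]_(m * p)) (S : {set 'I_m}) : 0 <= blocknorm_sum z S.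
Proof. by apply: sumr_ge0 => i _; apply: vnorm_ge0. Qed.

Lemma blocknorm_sum_le_all m p (z : 'cV[R]_(m * p)) (S : {set 'I_m}) :
  blocknorm_sum z S <= \sum_(i < m) vnorm (block z i).
Proof.
rewrite /blocknorm_sum big_mkcond /=; apply: ler_sum => i _.
by case: (i \in S) => //; apply: vnorm_ge0.
Qed.

Lemma sumsq_le_blocknorm_sum m p (z : 'cV[R]_(m * p)) (S : {set 'I_m}) :
  \sum_(i in S) \sum_(j < p) z (blk i j) 0 ^+ 2 <= blocknorm_sum z S ^+ 2.
Proof.
rewrite /blocknorm_sum expr2 mulr_suml; apply: ler_sum => i iS.
rewrite -vnorm_block expr2 ler_wpM2l ?vnorm_ge0 //.
by rewrite (bigD1 i) //= lerDl; apply: sumr_ge0 => j _; apply: vnorm_ge0.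
Qed.

Lemma vnorm_mask_blocks m p (z : 'cV[R]_(m * p)) (S : {set 'I_m}) :
  vnorm (mask_blocks S z) <= blocknorm_sum z S.
Proof.
apply: sqrtr_le_sq; first exact: blocknorm_sum_ge0.
apply: le_trans (sumsq_le_blocknorm_sum z S).
rewrite sum_blk (bigID (fun i => i \in S)) /= [X in _ + X]big1 ?addr0.
  by apply: ler_sum => i iS; apply: ler_sum => j _; rewrite !mxE blkofK iS.
by move=> i /negbTE iS; apply: big1 => j _; rewrite !mxE blkofK iS expr0n.
Qed.

Lemma sum_abs_mask_blocks1 m (z : 'cV[R]_(m * 1)) (S : {set 'I_m}) :
  \sum_(k < m * 1) `|mask_blocks S z k 0| = blocknorm_sum z S.
Proof.
rewrite sum_blk (bigID (fun i => i \in S)) /= [X in _ + X]big1 ?addr0; last first.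
  by move=> i /negbTE iS; apply: big1 => j _; rewrite !mxE blkofK iS normr0.
apply: eq_bigr => i iS; rewrite /vnorm !big_ord1 !mxE blkofK iS sqrtr_sqr.
by congr `|z _ 0|; apply: val_inj.
Qed.

Lemma trimmed_le K m p (z : 'cV[R]_(m * p)) (S : {set 'I_m}) :
  #|S| = (m - K)%N -> trimmed K z <= blocknorm_sum z S.
Proof. by move=> cardS; apply: bigmin_le_cond; rewrite cardS eqxx. Qed.

Lemma trimmed_ge0 K m p (z : 'cV[R]_(m * p)) : 0 <= trimmed K z.
Proof.
apply: le_bigmin; first by apply: sumr_ge0 => i _; apply: vnorm_ge0.
by move=> S _; apply: blocknorm_sum_ge0.
Qed.

Lemma trimmed_attained K m p (z : 'cV[R]_(m * p)) :
  exists2 S : {set 'I_m}, #|S| = (m - K)%N & trimmed K z = blocknorm_sum z S.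
Proof.
have S0P : (fun S : {set 'I_m} => #|S| == (m - K)%N)
    (widen_ord (leq_subr K m) @: [set: 'I_(m - K)])%SET.
  rewrite /= card_imset; first by rewrite cardsT card_ord.
  by move=> x y /(congr1 val) /= xy; apply: val_inj.
rewrite /trimmed (bigmin_eq_arg _ _ _ _ S0P); last by move=> S _; apply: blocknorm_sum_le_all.
by case: arg_minP => // S /eqP cardS _; exists S.
Qed.

End Blocks.

Section DescentDirections.
Variable R : realType.

Definition cancels_blocks m p n (D : 'M[R]_(m * p, n)) (d : 'cV[R]_n)
    (z : 'cV[R]_(m * p)) (S : {set 'I_m}) :=
  forall i j, i \in S -> (D *m d) (blk i j) 0 = - z (blk i j) 0.

Lemma descent_dir_surjective m p n (D : 'M[R]_(m * p, n)) (z : 'cV[R]_(m * p))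
    (S : {set 'I_m}) :
  D != 0 -> (forall y, exists x : 'cV[R]_n, D *m x = y) ->
  exists d, cancels_blocks D d z S /\ sigma_min D * vnorm d <= blocknorm_sum z S.
Proof.
move=> D0 D_surj; have [x Dx] := D_surj (- mask_blocks S z).
have [d [Dd d_le]] := min_norm_preimage x D0.
exists d; split; first by move=> i j iS; rewrite Dd Dx !mxE blkofK iS.
by apply: le_trans d_le _; rewrite Dx vnormN vnorm_mask_blocks.
Qed.

Lemma subblocks_mulmx_blk m p n (D : 'M[R]_(m * p, n)) (S : {set 'I_m}) (v : 'cV[R]_n)
    i j (iS : i \in S) :
  (subblocks D S *m v) (blk (enum_rank_in iS i) j) 0 = (D *m v) (blk i j) 0.
Proof. by rewrite subblocks_mulmx subblk_idx_blk enum_rankK_in. Qed.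

Lemma subblocks_neq0 m p n (D : 'M[R]_(m * p, n)) (x0 : 'cV[R]_n) (S : {set 'I_m}) :
  0 < blocknorm_sum (D *m x0) S -> subblocks D S != 0.
Proof.
apply: contraTneq => A0; rewrite -leNgt le_eqVlt; apply/orP; left; apply/eqP.
apply: big1 => i iS; rewrite /vnorm big1 ?sqrtr0 // => j _.
by rewrite mxE -(subblocks_mulmx_blk _ _ _ iS) A0 mul0mx mxE expr0n.
Qed.

Lemma descent_dir_subblocks m p n (D : 'M[R]_(m * p, n)) (x0 : 'cV[R]_n)
    (S : {set 'I_m}) :
  subblocks D S != 0 ->
  exists d, cancels_blocks D d (D *m x0) S /\
    sigma_min (subblocks D S) * vnorm d <= blocknorm_sum (D *m x0) S.
Proof.
move=> A0; have [d [Ad d_le]] := min_norm_preimage x0 A0.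
exists (- d); split.
  move=> i j iS; rewrite mulmxN mxE -(subblocks_mulmx_blk _ _ _ iS) Ad.
  by rewrite subblocks_mulmx_blk.
rewrite vnormN; apply: le_trans d_le _; apply: sqrtr_le_sq; first exact: blocknorm_sum_ge0.
apply: le_trans (sumsq_le_blocknorm_sum _ S).
rewrite -(sum_subblk S (fun k => (D *m x0) k 0 ^+ 2)).
by apply: ler_sum => k _; rewrite subblocks_mulmx.
Qed.

Lemma sigmaK_surjective K m p n (D : 'M[R]_(m * p, n)) :
  (forall y, exists x : 'cV[R]_n, D *m x = y) -> sigmaK K D = sigma_min D.
Proof. by move=> D_surj; rewrite /sigmaK asboolT. Qed.

(* [sigmaK] is the infimum of finitely many positive values, hence positive. *)
Lemma sigmaK_subblocks K m p n (D : 'M[R]_(m * p, n)) (S : {set 'I_m}) :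
  ~ (forall y, exists x : 'cV[R]_n, D *m x = y) -> #|S| = (m - K)%N -> subblocks D S != 0 ->
  0 < sigmaK K D <= sigma_min (subblocks D S).
Proof.
move=> D_nsurj cardS A0; rewrite /sigmaK asboolF //.
set E := [set s | _].
have ES : E (sigma_min (subblocks D S)) by exists S.
apply/andP; split; last by apply: ge_inf ES; exists 0 => _ [S' [_ _ ->]]; apply: sqrtr_ge0.
set lb := \big[Order.min/1]_(S' : {set 'I_m} | (#|S'| == (m - K)%N) && (subblocks D S' != 0))
  sigma_min (subblocks D S').
apply: (@lt_le_trans _ _ lb).
  apply/bigmin_gtP; split; first exact: ltr01.
  by move=> S' /andP [_ /sigma_min_gt0].
apply: lb_le_inf; first by exists (sigma_min (subblocks D S)).
by move=> _ [S' [/eqP cardS' A'0 ->]]; apply: bigmin_le_cond; rewrite cardS' A'0.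
Qed.

Lemma descent_dir_sigmaK K m p n (D : 'M[R]_(m * p, n)) (x0 : 'cV[R]_n)
    (S : {set 'I_m}) :
  D != 0 -> #|S| = (m - K)%N -> 0 < blocknorm_sum (D *m x0) S ->
  exists d, cancels_blocks D d (D *m x0) S /\
    0 < sigmaK K D /\ sigmaK K D * vnorm d <= blocknorm_sum (D *m x0) S.
Proof.
move=> D0 cardS T_gt0.
have [D_surj | D_nsurj] := pselect (forall y, exists x : 'cV[R]_n, D *m x = y).
  have [d [Dd d_le]] := descent_dir_surjective (D *m x0) S D0 D_surj.
  by exists d; rewrite sigmaK_surjective // sigma_min_gt0.
have A0 := subblocks_neq0 T_gt0.
have /andP [sig_gt0 sig_le] := sigmaK_subblocks D_nsurj cardS A0.
have [d [Dd d_le]] := descent_dir_subblocks x0 A0.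
by exists d; split => //; split => //; apply: le_trans d_le; rewrite ler_wpM2r ?vnorm_ge0.
Qed.

Lemma descent_dir_gradient_sigmaK K m p n (D : 'M[R]_(m * p, n)) (x0 a : 'cV[R]_n)
    (S : {set 'I_m}) (B gam : R) :
  D != 0 -> #|S| = (m - K)%N -> 0 < blocknorm_sum (D *m x0) S ->
  vnorm a <= B -> (sigmaK K D)^-1 * B < gam ->
  exists d, cancels_blocks D d (D *m x0) S /\
    \sum_(j < n) a j 0 * d j 0 < gam * blocknorm_sum (D *m x0) S.
Proof.
move=> D0 cardS T_gt0 aB Bgam.
have [d [Dd [sig_gt0 sig_d]]] := descent_dir_sigmaK D0 cardS T_gt0.
exists d; split => //; set T := blocknorm_sum _ _ in T_gt0 sig_d *.
have B_ge0 : 0 <= B := le_trans (vnorm_ge0 a) aB.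
have d_le : vnorm d <= T / sigmaK K D by rewrite ler_pdivlMr // mulrC.
apply: le_lt_trans (sum_mul_le_vnorm a d) _.
apply: le_lt_trans (_ : _ <= B * (T / sigmaK K D)) _.
  exact: le_trans (ler_wpM2r (vnorm_ge0 d) aB) (ler_wpM2l B_ge0 d_le).
by rewrite mulrCA mulrC (mulrC B) ltr_pM2r.
Qed.

Section NaturalIdentity.
Variables (a b : nat) (e : a = b) (D : 'M[R]_(a, b)).
Hypothesis D_id : forall i j, D i j = ((i : nat) == j)%:R.

Lemma natid_mulmx (v : 'cV[R]_b) k : (D *m v) k 0 = v (cast_ord e k) 0.
Proof.
rewrite mxE (bigD1 (cast_ord e k)) //= D_id eqxx mul1r big1 ?addr0 // => j jk.
by rewrite D_id; case: eqP => [kj|]; rewrite ?mul0r //; move: jk; rewrite -val_eqE /= kj eqxx.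
Qed.

Lemma natid_trmx_mulmx (v : 'cV[R]_a) j : (D^T *m v) j 0 = v (cast_ord (esym e) j) 0.
Proof.
rewrite mxE (bigD1 (cast_ord (esym e) j)) //= !mxE D_id eqxx mul1r big1 ?addr0 // => k kj.
rewrite !mxE D_id; case: eqP => [kj'|]; rewrite ?mul0r //.
by move: kj; rewrite -val_eqE /= kj' eqxx.
Qed.

End NaturalIdentity.

Lemma descent_dir_gradient_identity m p n (D : 'M[R]_(m * p, n)) (z : 'cV[R]_(m * p))
    (S : {set 'I_m}) (a : 'cV[R]_n) (B gam : R) :
  p = 1%N -> m = n -> (forall i j, D i j = ((i : nat) == j)%:R) ->
  0 < blocknorm_sum z S -> vnorm_inf a <= B -> B < gam ->
  exists d, cancels_blocks D d z S /\ \sum_(j < n) a j 0 * d j 0 < gam * blocknorm_sum z S.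
Proof.
move=> p1 mn D_id T_gt0 aB Bgam; subst p.
have e : (m * 1 = n)%N by rewrite muln1.
exists (- (D^T *m mask_blocks S z)); split.
  move=> i j iS; rewrite mulmxN mxE (natid_mulmx e D_id) (natid_trmx_mulmx e D_id).
  by rewrite cast_ordK !mxE blkofK iS.
apply: le_lt_trans (sum_mul_le_vnorm_inf a _) _.
have -> : \sum_(j < n) `|(- (D^T *m mask_blocks S z)) j 0| = blocknorm_sum z S.
  rewrite -sum_abs_mask_blocks1 (reindex (cast_ord e)) /=; last first.
    by exists (cast_ord (esym e)) => k _; [apply: cast_ordK | apply: cast_ordKV].
  by apply: eq_bigr => k _; rewrite mxE normrN (natid_trmx_mulmx e D_id) cast_ordK.
by apply: le_lt_trans (ler_wpM2r (blocknorm_sum_ge0 z S) aB) _; rewrite ltr_pM2r.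
Qed.

End DescentDirections.

Lemma trimmed_shrink (R : realType) K m p n (D : 'M[R]_(m * p, n)) (z : 'cV[R]_(m * p))
    (d : 'cV[R]_n) (S : {set 'I_m}) (t : R) :
  #|S| = (m - K)%N -> trimmed K z = blocknorm_sum z S -> cancels_blocks D d z S ->
  0 <= t <= 1 -> trimmed K (z + t *: (D *m d)) <= (1 - t) * trimmed K z.
Proof.
move=> cardS TS Dd /andP [t_ge0 t_le1]; apply: le_trans (trimmed_le _ cardS) _.
rewrite TS mulr_sumr le_eqVlt; apply/orP; left; apply/eqP; apply: eq_bigr => i iS.
apply: vnorm_scale; first by rewrite subr_ge0.
by move=> j; have := Dd i j iS; rewrite !mxE => ->; ring.
Qed.

Section ProductSpace.
Variables (R : realType) (L : nat) (n : 'I_L.+1 -> nat).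

Definition bsingle (l : 'I_L.+1) (d : 'cV[R]_(n l)) : bvec R n :=
  fun k => if l =P k is ReflectT e then ecast k ('cV[R]_(n k)) e d else 0.

Lemma bsingle_eq l (d : 'cV[R]_(n l)) : bsingle d l = d.
Proof. by rewrite /bsingle; case: (l =P l) => // e; rewrite (eq_irrelevance e (erefl l)). Qed.

Lemma bsingle_neq l k (d : 'cV[R]_(n l)) : l != k -> bsingle d k = 0.
Proof. by rewrite /bsingle; case: (l =P k) => // ->; rewrite eqxx. Qed.

Lemma badd_bopp0 (x : bvec R n) : badd x (bopp (bzero R n)) = x.
Proof. by apply: functional_extensionality_dep => l; rewrite /badd /bopp /bzero oppr0 addr0. Qed.

Lemma bdotC (x y : bvec R n) : bdot x y = bdot y x.
Proof. by apply: eq_bigr => l _; apply: eq_bigr => j _; rewrite mulrC. Qed.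

Lemma bdotZr (x y : bvec R n) t : bdot x (bscale t y) = t * bdot x y.
Proof.
rewrite /bdot mulr_sumr; apply: eq_bigr => l _; rewrite mulr_sumr.
by apply: eq_bigr => j _; rewrite /bscale mxE mulrCA.
Qed.

Lemma bdot_bsingle (x : bvec R n) l (d : 'cV[R]_(n l)) :
  bdot x (bsingle d) = \sum_(j < n l) x l j 0 * d j 0.
Proof.
rewrite /bdot (bigD1 l) //= bsingle_eq [X in _ + X]big1 ?addr0 // => k kl.
by rewrite bsingle_neq 1?eq_sym //; apply: big1 => j _; rewrite mxE mulr0.
Qed.

Lemma bnorm_bsingle l (d : 'cV[R]_(n l)) : bnorm (bsingle d) = vnorm d.
Proof.
rewrite /bnorm bdot_bsingle /vnorm; congr Num.sqrt.
by apply: eq_bigr => j _; rewrite bsingle_eq expr2.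
Qed.

Lemma bnorm_scale (x : bvec R n) t : 0 <= t -> bnorm (bscale t x) = t * bnorm x.
Proof.
move=> t_ge0; rewrite /bnorm bdotZr bdotC bdotZr mulrA -expr2.
by rewrite sqrtrM ?sqr_ge0 // sqrtr_sqr ger0_norm.
Qed.

Lemma bdot_self (x : bvec R n) : bdot x x = \sum_(l < L.+1) vnorm (x l) ^+ 2.
Proof.
apply: eq_bigr => l _; rewrite /vnorm sqr_sqrtr; last by apply: sumr_ge0 => j _; rewrite sqr_ge0.
by apply: eq_bigr => j _; rewrite expr2.
Qed.

Lemma vnorm_le_bnorm (x : bvec R n) l : vnorm (x l) <= bnorm x.
Proof.
rewrite /bnorm bdot_self -[vnorm _]ger0_norm ?vnorm_ge0 // -sqrtr_sqr.
rewrite ler_sqrt; last by apply: sumr_ge0 => k _; rewrite sqr_ge0.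
by rewrite (bigD1 l) //= lerDl; apply: sumr_ge0 => k _; rewrite sqr_ge0.
Qed.

Lemma bnorm_le_sqrt_sum (x : bvec R n) (C : 'I_L.+1 -> R) :
  (forall l, vnorm (x l) <= C l) -> bnorm x <= Num.sqrt (\sum_(l < L.+1) C l ^+ 2).
Proof.
move=> xC; rewrite /bnorm bdot_self ler_sqrt; last by apply: sumr_ge0 => l _; rewrite sqr_ge0.
by apply: ler_sum => l _; rewrite ler_sqr ?nnegrE ?vnorm_ge0 // (le_trans (vnorm_ge0 _) (xC l)).
Qed.

Lemma sum_update_bsingle (P : pred 'I_L.+1) (F : forall l, 'cV[R]_(n l) -> R) (x : bvec R n)
    l (d : 'cV[R]_(n l)) t :
  P l -> \sum_(k | P k) F k (badd x (bscale t (bsingle d)) k) - \sum_(k | P k) F k (x k)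
         = F l (x l + t *: d) - F l (x l).
Proof.
move=> Pl; rewrite (bigD1 l) //= [X in _ - X](bigD1 l) //=.
rewrite [\sum_(k < L.+1 | _) F k (badd _ _ k)](eq_bigr (fun k => F k (x k))); last first.
  by move=> k /andP [_ lk]; rewrite /badd /bscale bsingle_neq 1?eq_sym // scaler0 addr0.
by rewrite /badd /bscale bsingle_eq opprD addrACA subrr addr0.
Qed.

Lemma M_smooth_ge0 (M : R) (f : bvec R n -> R) (g : bvec R n -> bvec R n) l :
  M_smooth M f g -> (0 < n l)%N -> 0 <= M.
Proof.
move=> [_ lip] nl_gt0; pose d : 'cV[R]_(n l) := const_mx 1.
have d0 : d != 0.
  by apply/eqP => /matrixP/(_ (Ordinal nl_gt0) 0); rewrite !mxE => /eqP; rewrite oner_eq0.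
have := lip (bsingle d) (bzero R n); rewrite badd_bopp0 bnorm_bsingle.
by move=> /(le_trans (sqrtr_ge0 _)); rewrite pmulr_lge0 // vnorm_gt0.
Qed.

Lemma gradient_block_shift (M : R) (f : bvec R n -> R) (g : bvec R n -> bvec R n)
    (x : bvec R n) (C : 'I_L.+1 -> R) l :
  M_smooth M f g -> 0 <= M -> (forall k, vnorm (x k) <= C k) ->
  vnorm (g x l - g (bzero R n) l) <= M * Num.sqrt (\sum_(k < L.+1) C k ^+ 2).
Proof.
move=> [_ lip] M_ge0 xC.
apply: le_trans (vnorm_le_bnorm (badd (g x) (bopp (g (bzero R n)))) l) _.
by apply: le_trans (lip _ _) _; rewrite badd_bopp0 ler_wpM2l // bnorm_le_sqrt_sum.
Qed.

Lemma gradient_upper_bound (f : bvec R n -> R) (g : bvec R n -> bvec R n) (x v : bvec R n)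
    (eps : R) :
  is_gradient f g -> 0 < eps ->
  \forall t \near 0^'+, f (badd x (bscale t v)) - f x <= t * (bdot (g x) v + eps).
Proof.
move=> grad eps_gt0; set nv := bnorm v + 1.
have nv_gt0 : 0 < nv by rewrite /nv ltr_wpDl ?sqrtr_ge0.
have [del del_gt0 f_del] := grad x (eps / nv) (divr_gt0 eps_gt0 nv_gt0).
near=> t.
have t_gt0 : 0 < t by near: t; apply: nbhs_right_gt.
have t_lt : t < del / nv by near: t; apply: nbhs_right_lt; rewrite divr_gt0.
have tv : bnorm (bscale t v) = t * bnorm v by rewrite bnorm_scale // ltW.
have tv_lt : t * bnorm v < del.
  apply: le_lt_trans (_ : _ <= t * nv) _; first by rewrite ler_pM2l // /nv lerDl.
  by rewrite -ltr_pdivlMr.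
have eps_tv : eps / nv * (t * bnorm v) <= t * eps.
  by rewrite mulrCA ler_pM2l // mulrAC ler_pdivrMr // ler_pM2l // /nv lerDl.
have := f_del (bscale t v); rewrite tv bdotZr => /(_ tv_lt) /(le_trans (ler_norm _)).
by move: eps_tv; lra.
Unshelve. all: by end_near.
Qed.

(* Near [t = 0+] the difference quotient of [f + h] is at most
   [bdot (g x) v + (beta - bdot (g x) v) / 2 - beta < 0], so its limit cannot be nonnegative. *)
Lemma dstationary_no_descent (f : bvec R n -> R) (g : bvec R n -> bvec R n)
    (h : bvec R n -> R) (x v : bvec R n) (beta : R) :
  is_gradient f g -> dstationary (fun y => f y + h y) x ->
  (forall t, 0 < t < 1 -> h (badd x (bscale t v)) - h x <= - (t * beta)) ->
  beta <= bdot (g x) v.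
Proof.
move=> grad stat h_dec; rewrite leNgt; apply/negP => gap.
set a := beta - bdot (g x) v; have a2_gt0 : 0 < a / 2 by rewrite divr_gt0 // subr_gt0.
have [lam lam_lim lam_ge0] := stat v.
have near_lam := (cvgrPdist_lt _ _).1 lam_lim _ a2_gt0.
have f_le := gradient_upper_bound x v grad a2_gt0.
have [t [t01 [f_t q_t]]] : exists t, [/\ 0 < t < 1,
    f (badd x (bscale t v)) - f x <= t * (bdot (g x) v + a / 2) &
    `|lam - (f (badd x (bscale t v)) + h (badd x (bscale t v)) - (f x + h x)) / t| < a / 2].
  apply: (filter_ex (FF := at_right_proper_filter 0)); near=> t; split.
  - by apply/andP; split; near: t; [apply: nbhs_right_gt | apply: nbhs_right_lt; exact: ltr01].
  - by near: t; exact: f_le.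
  - by near: t; exact: near_lam.
have /andP [t_gt0 _] := t01.
have q_le : (f (badd x (bscale t v)) + h (badd x (bscale t v)) - (f x + h x)) / t <= - (a / 2).
  rewrite ler_pdivrMr //; have := h_dec t t01; move: f_t; rewrite /a; nra.
by move: (le_lt_trans (ler_norm _) q_t) q_le lam_ge0; lra.
Unshelve. all: by end_near.
Qed.

End ProductSpace.

Lemma mx_ncols_gt0 (R : ringType) r c (A : 'M[R]_(r, c)) : A != 0 -> (0 < c)%N.
Proof. by case: c A => // A; rewrite thinmx0 eqxx. Qed.

Unset Implicit Arguments. Set Strict Implicit.

Theorem mainTheorem5 (R : realType) (L : nat) (n m p K : 'I_L.+1 -> nat)
  (gam : 'I_L.+1 -> R)
  (c : forall l : 'I_L.+1, 'cV[R]_(m l * p l))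
  (D : forall l : 'I_L.+1, 'M[R]_(m l * p l, n l))
  (M : R) (f : bvec R n -> R) (g : bvec R n -> bvec R n)
  (xs : bvec R n) (C : 'I_L.+1 -> R) :
  (forall l : 'I_L.+1, (0 < l)%N -> 0 < gam l) ->
  (forall l : 'I_L.+1, (0 < l)%N -> (K l < m l)%N) ->
  (forall l : 'I_L.+1, (0 < l)%N -> D l != 0) ->
  M_smooth M f g ->
  (forall l : 'I_L.+1, (0 < l)%N -> exists xb : 'cV[R]_(n l), D l *m xb = c l) ->
  dstationary (fun x : bvec R n => f x +
      \sum_(l < L.+1 | (0 < l)%N) gam l * trimmed (K l) (D l *m x l - c l)) xs ->
  (forall l : 'I_L.+1, 0 < C l) ->
  (forall l : 'I_L.+1, vnorm (xs l) <= C l) ->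
  (forall l : 'I_L.+1, (0 < l)%N ->
     (sigmaK (K l) (D l))^-1 *
        (vnorm (g (bzero R n) l) + M * Num.sqrt (\sum_(k < L.+1) C k ^+ 2)) < gam l
     \/ [/\ p l = 1%N, m l = n l,
            (forall (i : 'I_(m l * p l)) (j : 'I_(n l)), D l i j = ((i : nat) == j)%:R),
            c l = 0 &
            vnorm_inf (g (bzero R n) l) + M * Num.sqrt (\sum_(k < L.+1) C k ^+ 2) < gam l]) ->
  forall l : 'I_L.+1, (0 < l)%N -> trimmed (K l) (D l *m xs l - c l) = 0.
Proof.
move=> gam_gt0 _ D_neq0 smooth c_range stat _ xs_le thresholds l l_gt0.
set z := D l *m xs l - c l; set T := trimmed (K l) z.
apply/eqP; rewrite eq_le trimmed_ge0 andbT leNgt; apply/negP => T_gt0.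
have [S cardS TS] := trimmed_attained (K l) z.
have [xb Dxb] := c_range l l_gt0.
have z_range : z = D l *m (xs l - xb) by rewrite mulmxBr Dxb.
have M_ge0 := M_smooth_ge0 smooth (mx_ncols_gt0 (D_neq0 l l_gt0)).
have g_shift := gradient_block_shift l smooth M_ge0 xs_le.
have [d [Dd gd_lt]] : exists d, cancels_blocks (D l) d z S /\
    \sum_(j < n l) g xs l j 0 * d j 0 < gam l * T.
  rewrite /T TS; case: (thresholds l l_gt0) => [sig_lt | [p1 mn D_id _ inf_lt]].
    rewrite z_range; apply: (descent_dir_gradient_sigmaK (D_neq0 l l_gt0) cardS _
      (vnorm_le_shift g_shift) sig_lt).
    by rewrite -z_range -TS.
  apply: (descent_dir_gradient_identity p1 mn D_id _ (vnorm_inf_le_shift g_shift) inf_lt).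
  by rewrite -TS.
suff : gam l * T <= \sum_(j < n l) g xs l j 0 * d j 0 by rewrite leNgt gd_lt.
rewrite -bdot_bsingle; apply: (dstationary_no_descent smooth.1 stat) => t t01.
rewrite (sum_update_bsingle (fun k y => gam k * trimmed (K k) (D k *m y - c k))) //=.
rewrite mulmxDr -scalemxAr addrAC -/z -/T.
have /andP [t_gt0 t_lt1] := t01.
have := trimmed_shrink (t := t) cardS TS Dd; rewrite (ltW t_gt0) (ltW t_lt1) => /(_ isT).
by have := gam_gt0 l l_gt0; rewrite -/T; nra.
Qed.
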